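(* Let $F:\mathcal C\to\mathcal D$ be a morphism of cylinder categories. Then $F$ is homotopy fully faithful if and only if the following holds: for every cofibration $i:A\hookrightarrow B$ in $\mathcal C$ such that $F(i)$ admits a retraction $r:F(B)\to F(A)$ in $\mathcal D$, there is a retraction $r':B\to A$ of $i$ in $\mathcal C$ such that $F(r')\sim_{F(A)} r$ (homotopic relative to $F(A)$).
   Context: A cylinder category is a category $\mathcal C$ with two classes of morphisms, the cofibrations and the weak equivalences (morphisms in both classes are called trivial cofibrations), such that: (1) both classes contain all isomorphisms and are closed under composition; (2) weak equivalences satisfy 2-out-of-6: if $f,g,h$ are composable and $f\circ g$, $g\circ h$ are weak equivalences then $f,g,h,f\circ g\circ h$ are; (3) $\mathcal C$ has an initial object $0$ and every $0\to X$ is a cofibration; (4) pushouts of cofibrations along arbitrary maps exist and are cofibrations; (5) pushouts of trivial cofibrations are trivial cofibrations; (6) for every object $X$ the codiagonal $X\sqcup X\to X$ factors as a cofibration $X\sqcup X\hookrightarrow IX$ followed by a weak equivalence $IX\to X$; (7) every trivial cofibration admits a retraction. A morphism of cylinder categories is a functor preserving cofibrations, weak equivalences, the initial object and pushouts along cofibrations. For a cofibration $A\hookrightarrow B$, a relative cylinder object is a factorization $B\sqcup_A B\hookrightarrow I_AB\xrightarrow{\sim}B$ of the codiagonal into a cofibration followed by a weak equivalence. Two maps $f,g:B\to X$ with $f|_A=g|_A$ are homotopic relative to $A$, written $f\sim_A g$, if $(f,g):B\sqcup_AB\to X$ extends to $I_AB\to X$ for some relative cylinder object. $F$ is homotopy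 fully faithful if for every cofibration $i:A\hookrightarrow B$ in $\mathcal C$, every arrow $x:A\to X$ in $\mathcal C$, and every $v:F(B)\to F(X)$ in $\mathcal D$ with $v\circ F(i)=F(x)$, there is $v':B\to X$ in $\mathcal C$ with $v'\circ i=x$ and $F(v')\sim_{F(A)} v$. *)

Set Implicit Arguments.
Set Universe Polymorphism.

Record Category := {
  Ob :> Type;
  Hom : Ob -> Ob -> Type;
  idm : forall X : Ob, Hom X X;
  comp : forall {X Y Z : Ob}, Hom Y Z -> Hom X Y -> Hom X Z;
  comp_assoc : forall (W X Y Z : Ob) (h : Hom Y Z) (g : Hom X Y) (f : Hom W X),
      comp h (comp g f) = comp (comp h g) f;
  comp_id_l : forall (X Y : Ob) (f : Hom X Y), comp (idm Y) f = f;
  comp_id_r : forall (X Y : Ob) (f : Hom X Y), comp f (idm X) = f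
}.

Arguments Hom {c} X Y.
Arguments idm {c} X.
Arguments comp {c X Y Z} g f.
Notation "g ∘ f" := (comp g f) (at level 40, left associativity).

Section CatDefs.
Context {C : Category}.

Definition is_iso {X Y : C} (f : Hom X Y) : Prop :=
  exists g : Hom Y X, g ∘ f = idm X /\ f ∘ g = idm Y.

Definition is_initial (O : C) : Prop :=
  forall X : C, exists f : Hom O X, forall g : Hom O X, g = f.

Definition is_pushout {A B C' P : C} (f : Hom A B) (g : Hom A C')
    (j1 : Hom B P) (j2 : Hom C' P) : Prop :=
  j1 ∘ f = j2 ∘ g /\
  forall (X : C) (h1 : Hom B X) (h2 : Hom C' X), h1 ∘ f = h2 ∘ g ->
    exists u : Hom P X, (u ∘ j1 = h1 /\ u ∘ j2 = h2) /\
      forall u' : Hom P X, u' ∘ j1 = h1 -> u' ∘ j2 = h2 -> u' = u.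

End CatDefs.

Record CylinderCategory := {
  cat :> Category;
  cof : forall X Y : cat, Hom X Y -> Prop;
  we  : forall X Y : cat, Hom X Y -> Prop;
  zero : cat;
  iso_cof : forall (X Y : cat) (f : Hom X Y), is_iso f -> cof _ _ f;
  iso_we  : forall (X Y : cat) (f : Hom X Y), is_iso f -> we _ _ f;
  cof_comp : forall (X Y Z : cat) (g : Hom Y Z) (f : Hom X Y),
      cof _ _ f -> cof _ _ g -> cof _ _ (g ∘ f);
  we_comp : forall (X Y Z : cat) (g : Hom Y Z) (f : Hom X Y),
      we _ _ f -> we _ _ g -> we _ _ (g ∘ f);
  we_2of6 : forall (W X Y Z : cat) (h : Hom W X) (g : Hom X Y) (f : Hom Y Z),
      we _ _ (f ∘ g) -> we _ _ (g ∘ h) ->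
      we _ _ f /\ we _ _ g /\ we _ _ h /\ we _ _ (f ∘ g ∘ h);
  zero_initial : is_initial zero;
  zero_cof : forall (X : cat) (f : Hom zero X), cof _ _ f;
  pushout_exists : forall (A B C' : cat) (f : Hom A B) (g : Hom A C'),
      cof _ _ f -> exists (P : cat) (j1 : Hom B P) (j2 : Hom C' P), is_pushout f g j1 j2;
  pushout_cof : forall (A B C' P : cat) (f : Hom A B) (g : Hom A C')
      (j1 : Hom B P) (j2 : Hom C' P),
      cof _ _ f -> is_pushout f g j1 j2 -> cof _ _ j2;
  pushout_we : forall (A B C' P : cat) (f : Hom A B) (g : Hom A C')
      (j1 : Hom B P) (j2 : Hom C' P),
      cof _ _ f -> we _ _ f -> is_pushout f g j1 j2 -> we _ _ j2;
  (* (6) cylinder objects: X ⊔ X  ↪ IX  ~> X factoring the codiagonal *)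
  cylinder : forall X : cat,
      exists (P : cat) (i1 i2 : Hom X P) (z : Hom zero X),
        is_pushout z z i1 i2 /\
        exists (IX : cat) (c : Hom P IX) (s : Hom IX X),
          cof _ _ c /\ we _ _ s /\ s ∘ c ∘ i1 = idm X /\ s ∘ c ∘ i2 = idm X;
  trivcof_retract : forall (X Y : cat) (f : Hom X Y),
      cof _ _ f -> we _ _ f -> exists r : Hom Y X, r ∘ f = idm X
}.

Arguments cof {c X Y} f.
Arguments we {c X Y} f.
Arguments zero {c}.

(* Relative homotopy: for i : A -> B, f ~_A g  iff  f∘i = g∘i and (f,g) :
   B ⊔_A B -> X extends along some relative cylinder object
   B ⊔_A B ↪ I_A B ~> B of the codiagonal. *)
Definition homotopic_rel {C : CylinderCategory} {A B X : C}
    (i : Hom A B) (f g : Hom B X) : Prop :=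
  f ∘ i = g ∘ i /\
  exists (P : C) (j1 j2 : Hom B P),
    is_pushout i i j1 j2 /\
    exists (I : C) (c : Hom P I) (s : Hom I B) (H : Hom I X),
      cof c /\ we s /\ s ∘ c ∘ j1 = idm B /\ s ∘ c ∘ j2 = idm B /\
      H ∘ c ∘ j1 = f /\ H ∘ c ∘ j2 = g.

Record CylMorphism (C D : CylinderCategory) := {
  Fob :> C -> D;
  Fmor : forall X Y : C, Hom X Y -> Hom (Fob X) (Fob Y);
  F_id : forall X : C, Fmor X X (idm X) = idm (Fob X);
  F_comp : forall (X Y Z : C) (g : Hom Y Z) (f : Hom X Y),
      Fmor X Z (g ∘ f) = Fmor Y Z g ∘ Fmor X Y f;
  F_cof : forall (X Y : C) (f : Hom X Y), cof f -> cof (Fmor X Y f);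
  F_we : forall (X Y : C) (f : Hom X Y), we f -> we (Fmor X Y f);
  F_initial : is_initial (Fob zero);
  F_pushout : forall (A B C' P : C) (f : Hom A B) (g : Hom A C')
      (j1 : Hom B P) (j2 : Hom C' P),
      cof f -> is_pushout f g j1 j2 ->
      is_pushout (Fmor A B f) (Fmor A C' g) (Fmor B P j1) (Fmor C' P j2)
}.

Arguments Fmor {C D} c {X Y} f.

Definition homotopy_fully_faithful {C D : CylinderCategory} (F : CylMorphism C D) : Prop :=
  forall (A B X : C) (i : Hom A B) (x : Hom A X) (v : Hom (F B) (F X)),
    cof i -> v ∘ Fmor F i = Fmor F x ->
    exists v' : Hom B X, v' ∘ i = x /\ homotopic_rel (Fmor F i) (Fmor F v') v.

(* Given a cofibration i : A -> B, a map
   x : A -> X and v : F B -> F X under F x, push i out along x to get a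
   cofibration j2 : X -> B ⊔_A X.  As F preserves this pushout, v and the
   identity of F X glue to a retraction of F j2, which the hypothesis
   realises up to homotopy rel F X by a retraction r' of j2; then r' ∘ j1
   solves the lifting problem.  What remains is that homotopies relative to
   j2 restrict along j1 to homotopies relative to i: a relative cylinder of
   B ⊔_A B maps into the given cylinder, and the homotopy extends along it. *)

Section Pushouts.
Context {C : Category}.

Lemma pushout_copair {A B C' P X : C} {f : Hom A B} {g : Hom A C'}
    {j1 : Hom B P} {j2 : Hom C' P} (h1 : Hom B X) (h2 : Hom C' X) :
  is_pushout f g j1 j2 -> h1 ∘ f = h2 ∘ g ->
  exists u : Hom P X, u ∘ j1 = h1 /\ u ∘ j2 = h2.
Proof.
  intros [_ U] E. destruct (U X h1 h2 E) as [u [Eu _]]. exists u. exact Eu.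
Qed.

Lemma pushout_hom_ext {A B C' P X : C} {f : Hom A B} {g : Hom A C'}
    {j1 : Hom B P} {j2 : Hom C' P} (u u' : Hom P X) :
  is_pushout f g j1 j2 -> u ∘ j1 = u' ∘ j1 -> u ∘ j2 = u' ∘ j2 -> u = u'.
Proof.
  intros [E U] E1 E2.
  destruct (U X (u' ∘ j1) (u' ∘ j2)) as [w [_ Uw]].
  { rewrite <- !comp_assoc, E. reflexivity. }
  rewrite (Uw u E1 E2), (Uw u' eq_refl eq_refl). reflexivity.
Qed.

Lemma pushout_sym {A B C' P : C} (f : Hom A B) (g : Hom A C')
    (j1 : Hom B P) (j2 : Hom C' P) :
  is_pushout f g j1 j2 -> is_pushout g f j2 j1.
Proof.
  intros [E U]. split; [symmetry; exact E |].
  intros X h1 h2 Eh. destruct (U X h2 h1 (eq_sym Eh)) as [u [[U1 U2] Uu]].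
  exists u. split; [auto |]. intros u' A1 A2. apply Uu; assumption.
Qed.

Lemma pushout_paste {A B C' P B' R : C} (f : Hom A B) (g : Hom A C')
    (p1 : Hom B P) (p2 : Hom C' P) (f' : Hom B B') (q1 : Hom B' R) (q2 : Hom P R) :
  is_pushout f g p1 p2 -> is_pushout f' p1 q1 q2 ->
  is_pushout (f' ∘ f) g q1 (q2 ∘ p2).
Proof.
  intros HP HR. pose proof HP as [E1 U1]. pose proof HR as [E2 U2]. split.
  - rewrite comp_assoc, E2, <- comp_assoc, E1, comp_assoc. reflexivity.
  - intros Y h1 h2 Eh.
    destruct (pushout_copair (h1 ∘ f') h2 HP) as [u1 [A1 A2]].
    { rewrite <- comp_assoc. exact Eh. }
    destruct (pushout_copair h1 u1 HR) as [u [B1 B2]].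
    { symmetry. exact A1. }
    exists u. split.
    + split; [exact B1 |]. rewrite comp_assoc, B2. exact A2.
    + intros u' F1 F2. apply (pushout_hom_ext u' u HR); [congruence |].
      apply (pushout_hom_ext _ _ HP).
      * rewrite <- !comp_assoc, <- E2, !comp_assoc, F1, B1. reflexivity.
      * rewrite B2, A2, <- comp_assoc. exact F2.
Qed.

End Pushouts.

Section CylinderCategoryFacts.
Context {C : CylinderCategory}.

Lemma we_idm (X : C) : we (idm X).
Proof. apply iso_we. exists (idm X). rewrite comp_id_l. auto. Qed.

Lemma we_cancel_l {X Y Z : C} (g : Hom Y Z) (f : Hom X Y) :
  we (g ∘ f) -> we g -> we f.
Proof.
  intros Wgf Wg. destruct (we_2of6 C _ _ _ _ f g (idm Z)) as [_ [_ [Wf _]]].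
  - rewrite comp_id_l. exact Wg.
  - exact Wgf.
  - exact Wf.
Qed.

Lemma we_cancel_r {X Y Z : C} (g : Hom Y Z) (f : Hom X Y) :
  we (g ∘ f) -> we f -> we g.
Proof.
  intros Wgf Wf. destruct (we_2of6 C _ _ _ _ (idm X) f g) as [Wg _].
  - exact Wgf.
  - rewrite comp_id_r. exact Wf.
  - exact Wg.
Qed.

Lemma extend_along_trivcof {U V Y : C} (t : Hom U V) (h : Hom U Y) :
  cof t -> we t -> exists h' : Hom V Y, h' ∘ t = h.
Proof.
  intros Ct Wt.
  destruct (pushout_exists C _ _ _ t h Ct) as [W [j1 [j2 Hp]]].
  destruct (trivcof_retract C _ _ j2 (pushout_cof C Ct Hp) (pushout_we C Ct Wt Hp))
    as [rho Hrho].
  exists (rho ∘ j1). destruct Hp as [E _].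
  rewrite <- comp_assoc, E, comp_assoc, Hrho, comp_id_l. reflexivity.
Qed.

(* Brown's factorization lemma, through the mapping cylinder
   M = IU ⊔_{U ⊔ U} (U ⊔ V) of h. *)
Lemma cof_we_factorization {U V : C} (h : Hom U V) :
  exists (M : C) (k : Hom U M) (w : Hom M V), cof k /\ we w /\ w ∘ k = h.
Proof.
  destruct (cylinder C U)
    as [P [i1 [i2 [z [HP [IU [c [s [Cc [Ws [S1 S2]]]]]]]]]]].
  assert (Ci2 : cof i2) by exact (pushout_cof C (zero_cof C _ z) HP).
  destruct (pushout_exists C _ _ _ i2 h Ci2) as [D' [d1 [d2 HD]]].
  assert (Cd1i1 : cof (d1 ∘ i1)).
  { exact (pushout_cof C (zero_cof C _ (h ∘ z))
             (pushout_paste _ _ _ _ _ _ _ (pushout_sym _ _ _ _ HP) (pushout_sym _ _ _ _ HD))). }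
  destruct (pushout_exists C _ _ _ c d1 Cc) as [M [n1 [n2 HM]]].
  assert (HM' := pushout_paste _ _ _ _ _ _ _ HD HM).
  assert (Wci2 : we (c ∘ i2)).
  { apply (we_cancel_l s); [rewrite comp_assoc, S2; apply we_idm | exact Ws]. }
  assert (Wn2d2 : we (n2 ∘ d2)).
  { exact (pushout_we C (cof_comp C _ _ _ _ _ Ci2 Cc) Wci2 HM'). }
  destruct (pushout_copair (h ∘ s) (idm V) HM') as [w [W1 W2]].
  { rewrite comp_id_l, <- comp_assoc, (comp_assoc _ _ _ _ _ s), S2, comp_id_r.
    reflexivity. }
  exists M, (n2 ∘ (d1 ∘ i1)), w. repeat split.
  - apply cof_comp; [exact Cd1i1 | exact (pushout_cof C Cc HM)].
  - apply (we_cancel_r w (n2 ∘ d2)); [rewrite W2; apply we_idm | exact Wn2d2].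
  - destruct HM as [EM _].
    rewrite (comp_assoc _ _ _ _ _ n2), <- EM, !comp_assoc, W1,
      <- !comp_assoc, (comp_assoc _ _ _ _ _ s), S1, comp_id_r.
    reflexivity.
Qed.

(* Push c out along m and factor the induced map to T: the new leg I -> N
   becomes a trivial cofibration, since it lies over the weak equivalence s. *)
Lemma extend_along_cof_over_we {Q J I T Y : C} (c : Hom Q J) (m : Hom Q I)
    (s : Hom I T) (t : Hom J T) (H : Hom I Y) :
  cof c -> we s -> s ∘ m = t ∘ c -> exists H' : Hom J Y, H' ∘ c = H ∘ m.
Proof.
  intros Cc Ws Esm.
  destruct (pushout_exists C _ _ _ c m Cc) as [N [a1 [a2 HN]]].
  destruct (pushout_copair t s HN) as [sig [G1 G2]]; [symmetry; exact Esm |].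
  destruct (cof_we_factorization sig) as [N' [e [w [Ce [Ww Ew]]]]].
  assert (Cea2 : cof (e ∘ a2)) by exact (cof_comp C _ _ _ _ _ (pushout_cof C Cc HN) Ce).
  assert (Wea2 : we (e ∘ a2)).
  { apply (we_cancel_l w); [rewrite comp_assoc, Ew, G2; exact Ws | exact Ww]. }
  destruct (extend_along_trivcof (e ∘ a2) H Cea2 Wea2) as [H0 EH0].
  exists (H0 ∘ e ∘ a1). destruct HN as [EN _].
  rewrite <- comp_assoc, EN, comp_assoc, <- (comp_assoc _ _ _ _ _ H0), EH0.
  reflexivity.
Qed.

Lemma relative_cylinder_exists {A B : C} (i : Hom A B) :
  cof i ->
  exists (Q : C) (l1 l2 : Hom B Q), is_pushout i i l1 l2 /\
    exists (J : C) (c : Hom Q J) (s : Hom J B),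
      cof c /\ we s /\ s ∘ c ∘ l1 = idm B /\ s ∘ c ∘ l2 = idm B.
Proof.
  intros Ci.
  destruct (pushout_exists C _ _ _ i i Ci) as [Q [l1 [l2 HQ]]].
  destruct (pushout_copair (idm B) (idm B) HQ eq_refl) as [nabla [N1 N2]].
  destruct (cof_we_factorization nabla) as [J [c [s [Cc [Ws Es]]]]].
  exists Q, l1, l2. split; [exact HQ |].
  exists J, c, s. rewrite Es. auto.
Qed.

Lemma homotopic_rel_precomp {A B X P Y : C} (i : Hom A B) (x : Hom A X)
    (j1 : Hom B P) (j2 : Hom X P) (f g : Hom P Y) :
  cof i -> j1 ∘ i = j2 ∘ x -> homotopic_rel j2 f g ->
  homotopic_rel i (f ∘ j1) (g ∘ j1).
Proof.
  intros Ci Ej [Efg [Q [k1 [k2 [HQ [I [c [s [H [Cc [Ws [S1 [S2 [H1 H2]]]]]]]]]]]]]].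
  split; [rewrite <- !comp_assoc, Ej, !comp_assoc, Efg; reflexivity |].
  destruct (relative_cylinder_exists i Ci)
    as [Q' [l1 [l2 [HQ' [J [c' [s' [Cc' [Ws' [S1' S2']]]]]]]]]].
  destruct (pushout_copair (c ∘ k1 ∘ j1) (c ∘ k2 ∘ j1) HQ') as [m [M1 M2]].
  { destruct HQ as [EQ _].
    rewrite <- !comp_assoc, Ej, (comp_assoc _ _ _ _ _ k1), EQ, !comp_assoc.
    reflexivity. }
  assert (Esm : s ∘ m = j1 ∘ s' ∘ c').
  { apply (pushout_hom_ext _ _ HQ').
    - rewrite <- comp_assoc, M1, !comp_assoc, S1, comp_id_l, <- !comp_assoc,
        (comp_assoc _ _ _ _ _ s'), S1', comp_id_r.
      reflexivity.
    - rewrite <- comp_assoc, M2, !comp_assoc, S2, comp_id_l, <- !comp_assoc,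
        (comp_assoc _ _ _ _ _ s'), S2', comp_id_r.
      reflexivity. }
  destruct (extend_along_cof_over_we c' m s (j1 ∘ s') H Cc' Ws Esm) as [H' EH'].
  exists Q', l1, l2. split; [exact HQ' |].
  exists J, c', s', H'. repeat split; try assumption.
  - rewrite EH', <- comp_assoc, M1, !comp_assoc, H1. reflexivity.
  - rewrite EH', <- comp_assoc, M2, !comp_assoc, H2. reflexivity.
Qed.

End CylinderCategoryFacts.

Theorem mainTheorem1 (C D : CylinderCategory) (F : CylMorphism C D) :
  homotopy_fully_faithful F <->
  (forall (A B : C) (i : Hom A B), cof i ->
     forall r : Hom (F B) (F A), r ∘ Fmor F i = idm (F A) ->
     exists r' : Hom B A, r' ∘ i = idm A /\ homotopic_rel (Fmor F i) (Fmor F r') r).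
Proof.
  split.
  - intros HFF A B i Ci r Er.
    apply (HFF A B A i (idm A) r Ci). rewrite F_id. exact Er.
  - intros Hretr A B X i x v Ci Ev.
    destruct (pushout_exists C _ _ _ i x Ci) as [P [j1 [j2 HP]]].
    pose proof (F_pushout F Ci HP) as FHP.
    destruct (pushout_copair v (idm (F X)) FHP) as [u [U1 U2]].
    { rewrite comp_id_l. exact Ev. }
    destruct (Hretr X P j2 (pushout_cof C Ci HP) u U2) as [r' [Er' Hr']].
    exists (r' ∘ j1). split.
    + destruct HP as [E _].
      rewrite <- comp_assoc, E, comp_assoc, Er', comp_id_l. reflexivity.
    + rewrite F_comp, <- U1.
      exact (homotopic_rel_precomp _ _ _ _ _ _ (F_cof F _ _ _ Ci) (proj1 FHP) Hr').
Qed.
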